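(* For every integer $r\ge 2$ the following hold: (a) every point of $R_r$ lies above $\ell_{r-1}$; (b) every point of $L_r$ lies below $\ell_{r-1}'$; (c) no point of $L_{r-1}$ lies below $\ell_{r-1}$; (d) no point of $L_{r-1}'$ lies below $\ell_{r-1}'$; (e) no point of $R_{r-1}$ lies above $\ell_{r-1}$; (f) no point of $R_{r-1}'$ lies above $\ell_{r-1}'$.
   Context: Define finite sets $P_r\subset\mathbb{Z}^2$ for integers $r\ge 0$ recursively: $P_0:=\{(0,0)\}$; for $r\ge 1$, $L_r:=P_{r-1}$, $R_r:=\{(x+\delta_r,\,y+\delta_r'):(x,y)\in L_r\}$ and $P_r:=L_r\cup R_r$, where $\delta_r:=3\cdot 4^{r-1}$ and $\delta_r':=(3r+1)\cdot 4^{r-1}$. For $r\ge 1$, let $\ell_r$ be the straight line through the rightmost point (largest $x$-coordinate) of $L_r$ and the leftmost point (smallest $x$-coordinate) of $R_r$. For $r\ge 2$, $R_r$ is the translate of $P_{r-1}=L_{r-1}\cup R_{r-1}$ by the vector $(\delta_r,\delta_r')$; let $L_{r-1}'$, $R_{r-1}'$ and $\ell_{r-1}'$ denote the translates of $L_{r-1}$, $R_{r-1}$ and of the line $\ell_{r-1}$, respectively, by $(\delta_r,\delta_r')$ (so $R_r=L_{r-1}'\cup R_{r-1}'$). *)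

From mathcomp Require Import all_boot all_order all_algebra.
Set Implicit Arguments. Unset Strict Implicit. Unset Printing Implicit Defensive.
Import Order.TTheory GRing.Theory Num.Theory.
Local Open Scope ring_scope.

Definition pt := (int * int)%type.

Definition delta (r : nat) : int := (3 * 4 ^ r.-1)%N%:Z.
Definition delta' (r : nat) : int := ((3 * r + 1) * 4 ^ r.-1)%N%:Z.

Definition shift (v : pt) (p : pt) : pt := (p.1 + v.1, p.2 + v.2).
Definition vec (r : nat) : pt := (delta r, delta' r).

Fixpoint P (r : nat) : seq pt :=
  match r with
  | 0 => [:: (0, 0)]
  | r'.+1 => P r' ++ map (shift (vec r'.+1)) (P r')
  end.

Definition Lset (r : nat) : seq pt := P r.-1.
Definition Rset (r : nat) : seq pt := map (shift (vec r)) (P r.-1).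

(* a point with largest / smallest x-coordinate of a (nonempty) list
   (x-coordinates in P_r are pairwise distinct, so this is the unique one) *)
Definition rightmost (s : seq pt) : pt :=
  foldr (fun a b => if b.1 < a.1 then a else b) (head (0, 0) s) s.
Definition leftmost (s : seq pt) : pt :=
  foldr (fun a b => if a.1 < b.1 then a else b) (head (0, 0) s) s.

(* a (non-vertical) line given by two points p, q with p.1 <> q.1 *)
Definition line := (pt * pt)%type.

Definition line_y (l : line) (x : int) : rat :=
  let: (p, q) := l in
  (p.2%:~R : rat) + ((q.2 - p.2)%:~R / (q.1 - p.1)%:~R) * ((x - p.1)%:~R).

Definition above (l : line) (z : pt) : Prop := line_y l z.1 < (z.2%:~R : rat).
Definition below (l : line) (z : pt) : Prop := (z.2%:~R : rat) < line_y l z.1.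

Definition ell (r : nat) : line := (rightmost (Lset r), leftmost (Rset r)).

Definition Lset' (r : nat) : seq pt := map (shift (vec r)) (Lset r.-1).
Definition Rset' (r : nat) : seq pt := map (shift (vec r)) (Rset r.-1).
Definition ell' (r : nat) : line :=
  (shift (vec r) (ell r.-1).1, shift (vec r) (ell r.-1).2).

From mathcomp Require Import all_boot all_order all_algebra zify ring.
Import Order.TTheory GRing.Theory Num.Theory.
Set Implicit Arguments. Unset Strict Implicit.
Local Open Scope ring_scope.

(* Write r = n + 2. Every point of P_n is a sum of some of the vectors
   v_k = (δ_k, δ'_k), k <= n, and its x-coordinate lies in [0, 4^n - 1], the
   two extremes being attained only at the origin and at the corner
   c_n = v_1 + ... + v_n. Hence ℓ_{n+1} joins c_n to v_{n+1}. For its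
   direction d, the linear form z |-> d × z is nonpositive on v_1, ..., v_{n+1},
   so on P_m (m <= n+1) it lies between its values at c_m and at the origin,
   while the side of ℓ_{n+1} on which z lies is the sign of d × z - d × c_n.
   This gives (c) and (e); (a) and (b) follow because c_{n+2} lies strictly
   above ℓ_{n+1}; (d) and (f) are translates of (c) and (e). *)

Definition cross (u w : pt) : int := u.1 * w.2 - u.2 * w.1.

Definition dir (l : line) : pt := (l.2.1 - l.1.1, l.2.2 - l.1.2).

Definition side (l : line) (z : pt) : int := cross (dir l) z - cross (dir l) l.1.

Definition shift_line (v : pt) (l : line) : line := (shift v l.1, shift v l.2).

Lemma cross_shift u v z : cross u (shift v z) = cross u z + cross u v.
Proof. by rewrite /cross /shift /=; ring. Qed.

Lemma cross_dir_snd l : cross (dir l) l.2 = cross (dir l) l.1.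
Proof. by case: l => [[a b] [c d]]; rewrite /cross /dir /=; ring. Qed.

Lemma dir_shift_line v l : dir (shift_line v l) = dir l.
Proof. by rewrite /dir /shift_line /shift /=; congr (_, _); ring. Qed.

Lemma side_shift_line v l z : side (shift_line v l) z = side l z - cross (dir l) v.
Proof. by rewrite /side dir_shift_line /= cross_shift; ring. Qed.

Lemma side_shift v l z : side (shift_line v l) (shift v z) = side l z.
Proof. by rewrite side_shift_line /side cross_shift; ring. Qed.

Lemma line_y_side l z : l.1.1 < l.2.1 ->
  (z.2%:~R : rat) - line_y l z.1 = (side l z)%:~R / (l.2.1 - l.1.1)%:~R.
Proof.
case: l => p q /= lt_pq.
have : ((q.1 - p.1)%:~R : rat) != 0 by rewrite intr_eq0 subr_eq0 gt_eqF.
rewrite /line_y /side /cross /dir /= !rmorphB !rmorphM /= => nz.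
by field.
Qed.

Lemma above_side l z : l.1.1 < l.2.1 -> above l z <-> 0 < side l z.
Proof.
move=> lt12; have pos : (0 : rat) < (l.2.1 - l.1.1)%:~R by rewrite ltr0z subr_gt0.
by rewrite /above -subr_gt0 line_y_side // ltr_pdivlMr // mul0r ltr0z.
Qed.

Lemma below_side l z : l.1.1 < l.2.1 -> below l z <-> side l z < 0.
Proof.
move=> lt12; have pos : (0 : rat) < (l.2.1 - l.1.1)%:~R by rewrite ltr0z subr_gt0.
by rewrite /below -subr_lt0 line_y_side // ltr_pdivrMr // mul0r ltrz0.
Qed.

Lemma shift_line_increasing v l :
  l.1.1 < l.2.1 -> (shift_line v l).1.1 < (shift_line v l).2.1.
Proof. by rewrite /shift_line /shift /= ltrD2r. Qed.

Lemma above_shift v l z : l.1.1 < l.2.1 ->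
  above (shift_line v l) (shift v z) <-> above l z.
Proof.
by move=> lt12; rewrite !above_side ?side_shift ?shift_line_increasing.
Qed.

Lemma below_shift v l z : l.1.1 < l.2.1 ->
  below (shift_line v l) (shift v z) <-> below l z.
Proof.
by move=> lt12; rewrite !below_side ?side_shift ?shift_line_increasing.
Qed.

Lemma foldr_pick_maximal (T : eqType) (R : rel T) (i : T) (s : seq T) :
  irreflexive R -> transitive R ->
  let m := foldr (fun a b => if R b a then a else b) i s in
  m \in i :: s /\ {in i :: s, forall y, ~~ R m y}.
Proof.
move=> irrR trR; elim: s => [|a s [IHmem IHmax]] /=.
  by split=> [|y]; rewrite ?inE // => /eqP ->; rewrite irrR.
set b := foldr _ _ _ in IHmem IHmax *.
case: ifP => Rba; split.
- by rewrite !inE eqxx orbT.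
- move=> y; rewrite !inE => /or3P [/eqP-> | /eqP-> | ys].
  + exact: contra (trR _ _ _ Rba) (IHmax _ (mem_head _ _)).
  + by rewrite irrR.
  + by apply: contra (trR _ _ _ Rba) (IHmax _ _); rewrite inE ys orbT.
- by move: IHmem; rewrite !inE => /orP [-> | ->]; rewrite ?orbT.
- move=> y; rewrite !inE => /or3P [/eqP-> | /eqP-> | ys].
  + exact: IHmax (mem_head _ _).
  + by rewrite Rba.
  + by apply: IHmax; rewrite inE ys orbT.
Qed.

Lemma rightmost_spec s : s != [::] ->
  rightmost s \in s /\ {in s, forall z, z.1 <= (rightmost s).1}.
Proof.
case: s => [//|a s] _; rewrite /rightmost [head _ _]/=.
have [mem max] := foldr_pick_maximal (R := fun x y : pt => x.1 < y.1) a (a :: s)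
  (fun x => ltxx _) (fun _ _ _ => @lt_trans _ _ _ _ _).
split=> [|z zs]; first by move: mem; rewrite inE => /orP [/eqP -> | //]; rewrite mem_head.
by rewrite leNgt; apply: max; rewrite inE zs orbT.
Qed.

Lemma leftmost_spec s : s != [::] ->
  leftmost s \in s /\ {in s, forall z, (leftmost s).1 <= z.1}.
Proof.
case: s => [//|a s] _; rewrite /leftmost [head _ _]/=.
have [mem min] := foldr_pick_maximal (R := fun x y : pt => y.1 < x.1) a (a :: s)
  (fun x => ltxx _) (fun _ _ _ x y => lt_trans y x).
split=> [|z zs]; first by move: mem; rewrite inE => /orP [/eqP -> | //]; rewrite mem_head.
by rewrite leNgt; apply: min; rewrite inE zs orbT.
Qed.

Fixpoint corner (n : nat) : pt :=
  if n is m.+1 then shift (vec m.+1) (corner m) else (0, 0).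

Lemma cornerE n : corner n = ((4 ^ n)%N%:Z - 1, (n * 4 ^ n)%N%:Z).
Proof.
elim: n => [//|n IH] /=; rewrite IH /shift /vec /delta /delta' /=.
by congr (_, _); rewrite !expnS; lia.
Qed.

Lemma mem_corner_P n : corner n \in P n.
Proof. by elim: n => [|n IH] /=; rewrite ?inE // mem_cat map_f ?orbT. Qed.

Lemma mem_origin_P n : (0, 0) \in P n.
Proof. by elim: n => [|n IH] /=; rewrite ?inE // mem_cat IH. Qed.

Lemma mem_P_x n (z : pt) : z \in P n ->
  [/\ 0 <= z.1, z.1 <= (4 ^ n)%N%:Z - 1,
      z.1 = 0 -> z = (0, 0) & z.1 = (4 ^ n)%N%:Z - 1 -> z = corner n].
Proof.
elim: n z => [|n IH] z /=; first by rewrite inE => /eqP ->; split; rewrite ?expn0.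
have pos : (0 < 4 ^ n)%N by rewrite expn_gt0.
rewrite mem_cat expnS => /orP [/IH [x_ge0 x_le x0 xmax] |
                               /mapP [w /IH [x_ge0 x_le _ xmax] ->]].
  by split=> // [|xE]; [lia | exfalso; lia].
rewrite /shift /vec /delta /=; split=> [||xE|xE]; try lia.
by rewrite xmax //; lia.
Qed.

Lemma P_neq_nil n : P n != [::].
Proof. by apply: contraTneq (mem_origin_P n) => ->. Qed.

Lemma rightmost_P n : rightmost (P n) = corner n.
Proof.
have [mem max] := rightmost_spec (P_neq_nil n).
have [_ x_le _ xmax] := mem_P_x mem; apply: xmax.
by have := max _ (mem_corner_P n); rewrite cornerE /=; lia.
Qed.

Lemma leftmost_Rset n : leftmost (Rset n.+1) = vec n.+1.
Proof.
have origin_R : shift (vec n.+1) (0, 0) \in Rset n.+1 by rewrite map_f ?mem_origin_P.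
have R_neq_nil : Rset n.+1 != [::] by apply: contraTneq origin_R => ->.
have [/mapP [w w_P ->] min] := leftmost_spec R_neq_nil.
have [x_ge0 _ x0 _] := mem_P_x w_P.
suff -> : w = (0, 0) by rewrite /shift /= !add0r.
by apply: x0; have := min _ origin_R; rewrite /shift /=; lia.
Qed.

Lemma ell_succ n : ell n.+1 = (corner n, vec n.+1).
Proof. by rewrite /ell leftmost_Rset /Lset rightmost_P. Qed.

Lemma ell_increasing n : (ell n.+1).1.1 < (ell n.+1).2.1.
Proof. by rewrite ell_succ cornerE /vec /delta /=; lia. Qed.

Lemma cross_P_bounds u n (z : pt) :
  (forall k, (0 < k <= n)%N -> cross u (vec k) <= 0) ->
  z \in P n -> cross u (corner n) <= cross u z <= 0.
Proof.
elim: n z => [|n IH] z vec_le0 /=.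
  by rewrite inE => /eqP ->; rewrite /cross !mulr0 subrr lexx.
have {}IH w : w \in P n -> cross u (corner n) <= cross u w <= 0.
  by apply: IH => k /andP [k_gt0 k_le]; rewrite vec_le0 // k_gt0 ltnW.
have last_le0 := vec_le0 n.+1 (leqnn _).
have corner_le0 := IH _ (mem_corner_P n).
rewrite cross_shift mem_cat => /orP [/IH z_bounds | /mapP [w /IH w_bounds ->]].
  lia.
by rewrite cross_shift; lia.
Qed.

Lemma cross_dir_ell_vec n k : (0 < k <= n.+1)%N -> cross (dir (ell n.+1)) (vec k) <= 0.
Proof.
case: k => [//|j] /= j_le.
rewrite ell_succ cornerE /cross /dir /vec /delta /delta' /=.
have : (n < 4 ^ n)%N by apply: ltn_expl.
have : (0 < 4 ^ j)%N by rewrite expn_gt0.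
move: (4 ^ n)%N (4 ^ j)%N => t s s_gt0 n_lt_t.
nia.
Qed.

Lemma cross_dir_ell_P n m z : (m <= n.+1)%N -> z \in P m ->
  cross (dir (ell n.+1)) (corner m) <= cross (dir (ell n.+1)) z <= 0.
Proof.
move=> m_le; apply: cross_P_bounds => k /andP [k_gt0 k_le].
by apply: cross_dir_ell_vec; rewrite k_gt0 (leq_trans k_le).
Qed.

Lemma corner_above_ell n : 0 < side (ell n.+1) (corner n.+2).
Proof.
rewrite /side ell_succ !cornerE /cross /dir /vec /delta /delta' /= !expnS.
have : (0 < 4 ^ n)%N by rewrite expn_gt0.
move: (4 ^ n)%N => t t_gt0.
nia.
Qed.

Lemma side_ell n z :
  side (ell n.+1) z = cross (dir (ell n.+1)) z - cross (dir (ell n.+1)) (corner n).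
Proof. by rewrite /side; set d := dir _; rewrite ell_succ. Qed.

Lemma cross_dir_ell_vec_succ n :
  cross (dir (ell n.+1)) (vec n.+1) = cross (dir (ell n.+1)) (corner n).
Proof. by have := cross_dir_snd (ell n.+1); set d := dir _; rewrite ell_succ. Qed.

Lemma Lset_not_below_ell n z : z \in Lset n.+1 -> ~ below (ell n.+1) z.
Proof.
move=> /(cross_dir_ell_P (leqnSn n)) z_bounds.
by rewrite below_side ?ell_increasing // side_ell; lia.
Qed.

Lemma Rset_not_above_ell n z : z \in Rset n.+1 -> ~ above (ell n.+1) z.
Proof.
move=> /mapP [w /(cross_dir_ell_P (leqnSn n)) w_bounds ->].
rewrite above_side ?ell_increasing // side_ell cross_shift cross_dir_ell_vec_succ; lia.
Qed.

Lemma Rset_above_ell n z : z \in Rset n.+2 -> above (ell n.+1) z.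
Proof.
move=> /mapP [w /(cross_dir_ell_P (leqnn _)) /= w_bounds ->].
have := corner_above_ell n; have := cross_dir_ell_vec_succ n.
rewrite above_side ?ell_increasing // !side_ell /= !cross_shift in w_bounds *; lia.
Qed.

Lemma Lset_below_ell' n z : z \in Lset n.+2 -> below (ell' n.+2) z.
Proof.
move=> /(cross_dir_ell_P (leqnn _)) /= z_bounds.
have := corner_above_ell n; have := cross_dir_ell_vec_succ n.
rewrite below_side ?shift_line_increasing ?ell_increasing //.
rewrite side_shift_line !side_ell /= !cross_shift in z_bounds *; lia.
Qed.

Theorem lemma3 (r : nat) : (2 <= r)%N ->
  (forall z, z \in Rset r -> above (ell r.-1) z) /\
  (forall z, z \in Lset r -> below (ell' r) z) /\
  (forall z, z \in Lset r.-1 -> ~ below (ell r.-1) z) /\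
  (forall z, z \in Lset' r -> ~ below (ell' r) z) /\
  (forall z, z \in Rset r.-1 -> ~ above (ell r.-1) z) /\
  (forall z, z \in Rset' r -> ~ above (ell' r) z).
Proof.
case: r => [|[|n]] // _.
split; first exact: Rset_above_ell.
split; first exact: Lset_below_ell'.
split; first exact: Lset_not_below_ell.
split.
  move=> _ /mapP [z z_L ->].
  by rewrite (below_shift _ _ (ell_increasing n)); apply: Lset_not_below_ell.
split; first exact: Rset_not_above_ell.
move=> _ /mapP [z z_R ->].
by rewrite (above_shift _ _ (ell_increasing n)); apply: Rset_not_above_ell.
Qed.
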